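(* Let $x_1,x_2,x_3,x_4\in\mathbb{Z}^3$ be the vertices of a Fano tetrahedron, and let $\lambda_1\le\lambda_2\le\lambda_3\le\lambda_4$ be non-negative integers with $\gcd(\lambda_1,\ldots,\lambda_4)=1$ and $\sum_i\lambda_ix_i=0$. Then there exist $g\in GL(3,\mathbb{Z})$, integers $a,b$ with $a>0$ and $a\lambda_3+b\lambda_4=1$, and $k,k',k''\in\mathbb{N}$ with $$0\le k''\lambda_4-a\lambda_1<k\lambda_4,\qquad 0\le k'\lambda_4-a\lambda_2<k\lambda_4,$$ such that $gx_1=(1,0,0)$, $gx_2=(0,1,0)$, $gx_3=(k''\lambda_4-a\lambda_1,\ k'\lambda_4-a\lambda_2,\ k\lambda_4)$ and $gx_4=(-k''\lambda_3-b\lambda_1,\ -k'\lambda_3-b\lambda_2,\ -k\lambda_3)$. Moreover, one of the two lower inequalities above can be an equality (i.e. $k''\lambda_4-a\lambda_1=0$ or $k'\lambda_4-a\lambda_2=0$) only if $\lambda_4=1$.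
   Context: A tetrahedron is called Fano if its vertices lie in $\mathbb{Z}^3$ and the only lattice point it contains other than its vertices is the origin, which lies strictly in its interior. *)

From HB Require Import structures.
From mathcomp Require Import all_boot all_order all_algebra.
Set Implicit Arguments. Unset Strict Implicit. Unset Printing Implicit Defensive.
Import Order.TTheory GRing.Theory Num.Theory.
Local Open Scope ring_scope.

Definition pt := 'cV[int]_3.

Definition toQ (p : pt) : 'cV[rat]_3 := map_mx (fun z : int => z%:~R) p.

Definition vec3 (a b c : int) : pt :=
  \col_(i < 3) (if i == 0 :> nat then a else if i == 1 :> nat then b else c).

Definition nondegenerate (x1 x2 x3 x4 : pt) : Prop :=
  \det (row_mx (row_mx (x2 - x1) (x3 - x1)) (x4 - x1)) != 0.

Definition in_tetra (x1 x2 x3 x4 : pt) (p : 'cV[rat]_3) : Prop :=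
  exists c1 c2 c3 c4 : rat,
    [/\ 0 <= c1, 0 <= c2, 0 <= c3 & 0 <= c4] /\ c1 + c2 + c3 + c4 = 1 /\
    p = c1 *: toQ x1 + c2 *: toQ x2 + c3 *: toQ x3 + c4 *: toQ x4.

Definition in_tetra_interior (x1 x2 x3 x4 : pt) (p : 'cV[rat]_3) : Prop :=
  exists c1 c2 c3 c4 : rat,
    [/\ 0 < c1, 0 < c2, 0 < c3 & 0 < c4] /\ c1 + c2 + c3 + c4 = 1 /\
    p = c1 *: toQ x1 + c2 *: toQ x2 + c3 *: toQ x3 + c4 *: toQ x4.

Definition fano (x1 x2 x3 x4 : pt) : Prop :=
  [/\ nondegenerate x1 x2 x3 x4,
      in_tetra_interior x1 x2 x3 x4 0 &
      forall p : pt, in_tetra x1 x2 x3 x4 (toQ p) ->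
        p = 0 \/ p = x1 \/ p = x2 \/ p = x3 \/ p = x4].

(* The rational relations among the vertices of a Fano tetrahedron
   are the multiples of the barycentric coordinates of the origin, which are all
   positive; so a relation with a vanishing coefficient is trivial.  Hence the
   triangle [0 x1 x2] contains no lattice points besides its vertices, so the
   half-open parallelogram spanned by [x1, x2] contains only [0] and [x1, x2]
   extends to a basis of Z^3, in which [x3] has a nonzero third coordinate.
   In such a basis, [sum_i l_i x_i = 0] reads [l1 + l3 p + l4 s = 0],
   [l2 + l3 q + l4 t = 0], [l3 r + l4 u = 0]; as [gcd(l3, l4) = 1], a Bezout
   pair [a l3 + b l4 = 1] parametrizes the solutions, e.g.
   [p = m l4 - a l1, s = - m l3 - b l1] and [r = k l4, u = - k l3].  A shear
   fixing [x1, x2] changes [m] by multiples of [k], which yields the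
   inequalities.  If a residue [k'' l4 - a l1] vanishes then [l4] divides
   [l1] (similarly for [l2]), so [l4 <= l1 <= l3 <= l4], and then
   [gcd(l3, l4) = 1] gives [l4 = 1]. *)

From Pilot Require Import Defs.
From HB Require Import structures.
From mathcomp Require Import all_boot all_order all_algebra.
From mathcomp Require Import ring lra zify.
Import Order.TTheory GRing.Theory Num.Theory.
Set Implicit Arguments.
Unset Strict Implicit.
Unset Printing Implicit Defensive.

Local Open Scope ring_scope.

Lemma vec3_eta (v : pt) : v = vec3 (v 0 0) (v 1 0) (v 2 0).
Proof.
apply/matrixP=> i j; rewrite !mxE (ord1 j).
by case: i => [[|[|[|//]]] i_lt3] /=; congr (v _ _); apply: val_inj.
Qed.

Lemma vec3_inj (a b c a' b' c' : int) :
  vec3 a b c = vec3 a' b' c' -> [/\ a = a', b = b' & c = c'].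
Proof.
by move/matrixP=> E; split; [move: (E 0 0) | move: (E 1 0) | move: (E 2 0)]; rewrite !mxE.
Qed.

Lemma vec3D (a b c a' b' c' : int) :
  vec3 a b c + vec3 a' b' c' = vec3 (a + a') (b + b') (c + c').
Proof. by apply/matrixP=> i j; rewrite !mxE; case: ifP => //; case: ifP. Qed.

Lemma vec3Z (z a b c : int) : z *: vec3 a b c = vec3 (z * a) (z * b) (z * c).
Proof. by apply/matrixP=> i j; rewrite !mxE; case: ifP => //; case: ifP. Qed.

Lemma vec30 : vec3 0 0 0 = 0.
Proof. by apply/matrixP=> i j; rewrite !mxE; case: ifP => //; case: ifP. Qed.

Definition mx3 (a b c d e f g h k : int) : 'M[int]_3 := \matrix_(i < 3, j < 3)
  (if i == 0 :> nat then (if j == 0 :> nat then a else if j == 1 :> nat then b else c)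
   else if i == 1 :> nat then (if j == 0 :> nat then d else if j == 1 :> nat then e else f)
   else (if j == 0 :> nat then g else if j == 1 :> nat then h else k)).

Lemma mx3_vec3 (a b c d e f g h k x y z : int) :
  mx3 a b c d e f g h k *m vec3 x y z =
  vec3 (a * x + b * y + c * z) (d * x + e * y + f * z) (g * x + h * y + k * z).
Proof.
apply/matrixP=> i j; rewrite !mxE !big_ord_recl big_ord0 !mxE /= addr0.
by case: i => [[|[|[|//]]] i_lt3] /=; rewrite addrA.
Qed.

Lemma mx3_mul (a b c d e f g h k a' b' c' d' e' f' g' h' k' : int) :
  mx3 a b c d e f g h k *m mx3 a' b' c' d' e' f' g' h' k' =
  mx3 (a * a' + b * d' + c * g') (a * b' + b * e' + c * h') (a * c' + b * f' + c * k')
      (d * a' + e * d' + f * g') (d * b' + e * e' + f * h') (d * c' + e * f' + f * k')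
      (g * a' + h * d' + k * g') (g * b' + h * e' + k * h') (g * c' + h * f' + k * k').
Proof.
apply/matrixP=> i j; rewrite !mxE !big_ord_recl big_ord0 !mxE /= addr0.
by case: i => [[|[|[|//]]] i_lt3]; case: j => [[|[|[|//]]] j_lt3] /=; rewrite addrA.
Qed.

Lemma mx3_1 : mx3 1 0 0 0 1 0 0 0 1 = 1%:M.
Proof.
apply/matrixP=> i j; rewrite !mxE.
by case: i => [[|[|[|//]]] i_lt3]; case: j => [[|[|[|//]]] j_lt3].
Qed.

Lemma shear_unitmx (j j' : int) : mx3 1 0 j 0 1 j' 0 0 1 \in unitmx.
Proof.
suff /mulmx1_unit[] : mx3 1 0 j 0 1 j' 0 0 1 *m mx3 1 0 (- j) 0 1 (- j') 0 0 1 = 1%:M by [].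
by rewrite mx3_mul -mx3_1; congr mx3; ring.
Qed.

(* [x1, x2] is a basis of the lattice points of the plane it spans; the case
   [D = 0] says that [x1] and [x2] are linearly independent. *)
Definition primitive_pair (x1 x2 : pt) : Prop :=
  forall (m1 m2 D : int) (y : pt),
    m1 *: x1 + m2 *: x2 = D *: y -> (D %| m1)%Z /\ (D %| m2)%Z.

Lemma primitive_pair_mulmx (g : 'M[int]_3) (x1 x2 : pt) :
  g \in unitmx -> primitive_pair x1 x2 -> primitive_pair (g *m x1) (g *m x2).
Proof.
move=> g_unit x12 m1 m2 D y m_y; apply: (x12 _ _ _ (invmx g *m y)).
rewrite scalemxAr; apply: (canRL (mulKmx g_unit)).
by rewrite mulmxDr -!scalemxAr.
Qed.

Lemma primitive_pair_planar_det (al ga be de : int) :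
  primitive_pair (vec3 al ga 0) (vec3 be de 0) -> (al * de - be * ga) ^+ 2 = 1.
Proof.
move=> prim; set D := al * de - be * ga.
have [D_de D_Nga] : (D %| de)%Z /\ (D %| - ga)%Z.
  by apply: (prim _ _ _ (vec3 1 0 0)); rewrite !vec3Z vec3D; congr vec3; rewrite /D; ring.
have [D_Nbe D_al] : (D %| - be)%Z /\ (D %| al)%Z.
  by apply: (prim _ _ _ (vec3 0 1 0)); rewrite !vec3Z vec3D; congr vec3; rewrite /D; ring.
have [D0 | D_neq0] := eqVneq D 0.
  move: D_al D_Nga; rewrite D0 !dvd0z oppr_eq0 => /eqP al0 /eqP ga0.
  have [] := prim 1 0 0 0; last by rewrite dvd0z.
  by rewrite al0 ga0 vec30 scaler0 add0r !scale0r.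
have : (D * D %| al * de - (- be) * (- ga))%Z by rewrite rpredB ?dvdz_mul.
rewrite mulrNN -/D -[X in (_ %| X)%Z]mulr1 dvdz_mul2l // dvdz1 => /eqP absD.
by rewrite -real_normK ?num_real // -abszE absD expr1n.
Qed.

Lemma exists_unimodular_planar (x1 x2 : pt) :
  exists2 h : 'M[int]_3, h \in unitmx & (h *m x1) 2 0 = 0 /\ (h *m x2) 2 0 = 0.
Proof.
have [L L_unit [R _ [d _ E]]] := int_Smith_normal_form (row_mx x1 x2).
exists (invmx L); first by rewrite unitmx_inv.
have row2_0 (j : 'I_(1 + 1)) : (invmx L *m row_mx x1 x2) 2 j = 0.
  rewrite E mulmxA mulKmx // !mxE big1 // => k _.
  by rewrite mxE; case: k => [[|[|//]] k_lt2]; rewrite mulr0n mul0r.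
split.
- by move: (row2_0 (lshift 1 0)); rewrite mul_mx_row row_mxEl.
- by move: (row2_0 (rshift 1 0)); rewrite mul_mx_row row_mxEr.
Qed.

Lemma primitive_pair_basis (x1 x2 : pt) : primitive_pair x1 x2 ->
  exists2 g : 'M[int]_3, g \in unitmx & g *m x1 = vec3 1 0 0 /\ g *m x2 = vec3 0 1 0.
Proof.
move=> prim; have [h h_unit [hx1_2 hx2_2]] := exists_unimodular_planar x1 x2.
have [al [ga hx1]] : exists al ga, h *m x1 = vec3 al ga 0.
  by exists ((h *m x1) 0 0), ((h *m x1) 1 0); rewrite -hx1_2 -vec3_eta.
have [be [de hx2]] : exists be de, h *m x2 = vec3 be de 0.
  by exists ((h *m x2) 0 0), ((h *m x2) 1 0); rewrite -hx2_2 -vec3_eta.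
have := primitive_pair_mulmx h_unit prim; rewrite hx1 hx2 => /primitive_pair_planar_det.
set D := _ - _ => D2.
(* As [D ^+ 2 = 1], [D] times the adjugate of [[al, be], [ga, de]] is its inverse. *)
pose a := mx3 (D * de) (- (D * be)) 0 (- (D * ga)) (D * al) 0 0 0 1.
exists (a *m h).
  rewrite unitmx_mul h_unit andbT.
  suff /mulmx1_unit[] : a *m mx3 al be 0 ga de 0 0 0 1 = 1%:M by [].
  by rewrite mx3_mul -mx3_1; congr mx3; rewrite -?D2 /D; ring.
by rewrite -!mulmxA hx1 hx2 !mx3_vec3; split; congr vec3; rewrite -?D2 /D; ring.
Qed.

Lemma coprime_of_relations (l1 l2 l3 l4 : nat) (p q s t : int) :
  gcdn (gcdn (gcdn l1 l2) l3) l4 = 1%N ->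
  l1%:Z + l3%:Z * p + l4%:Z * s = 0 -> l2%:Z + l3%:Z * q + l4%:Z * t = 0 ->
  coprime l3 l4.
Proof.
move=> gcd1 rel1 rel2.
have gcd34_dvd (l : nat) (p' s' : int) :
    l%:Z + l3%:Z * p' + l4%:Z * s' = 0 -> (gcdn l3 l4 %| l)%N.
  move=> rel; rewrite -[l]/(`|l%:Z|)%N -[gcdn _ _]/(`|(gcdn l3 l4)%:Z|)%N -dvdzE.
  have -> : l%:Z = - (l3%:Z * p' + l4%:Z * s') by lia.
  by rewrite rpredN rpredD ?dvdz_mulr // dvdzE /= (dvdn_gcdl, dvdn_gcdr).
rewrite /coprime -dvdn1 -gcd1 !dvdn_gcd (gcd34_dvd _ _ _ rel1) (gcd34_dvd _ _ _ rel2).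
by rewrite dvdn_gcdl dvdn_gcdr.
Qed.

Lemma bezout_pos (l3 l4 : nat) : (0 < l3)%N -> coprime l3 l4 ->
  exists a b : int, 0 < a /\ a * l3%:Z + b * l4%:Z = 1.
Proof.
move=> l3_gt0 /eqP gcd1; case: (egcdnP l4 l3_gt0) => km kn; rewrite gcd1 => E _.
by exists km%:Z, (- kn%:Z); split; nia.
Qed.

Lemma bezout_solution (a b l3 l4 l p s : int) :
  a * l3 + b * l4 = 1 -> l + l3 * p + l4 * s = 0 ->
  exists m, p = m * l4 - a * l /\ s = - (m * l3) - b * l.
Proof.
move=> bez rel; exists (b * p - a * s).
have -> : l = - (l3 * p + l4 * s) by lia.
by split; [rewrite -{1}(mulr1 p) -bez | rewrite -{1}(mulr1 s) -bez]; ring.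
Qed.

Lemma exists_nat_residue (k l4 l : nat) (a m : int) :
  (0 < k)%N -> (0 < l4)%N -> 0 <= a ->
  exists (j : int) (n : nat), m = n%:Z + j * k%:Z /\
    0 <= n%:Z * l4%:Z - a * l%:Z < k%:Z * l4%:Z.
Proof.
move=> k_gt0 l4_gt0 a_ge0; set K := k%:Z * l4%:Z.
have K_gt0 : 0 < K by rewrite mulr_gt0 ?ltz_nat.
set x := m * l4%:Z - a * l%:Z; pose j := (x %/ K)%Z.
have res : (m - j * k%:Z) * l4%:Z - a * l%:Z = (x %% K)%Z.
  by have := divz_eq x K; rewrite /x /K -/j; lia.
have n_ge0 : 0 <= m - j * k%:Z.
  rewrite -(pmulr_lge0 _ (_ : 0 < l4%:Z)) ?ltz_nat //.
  by have := modz_ge0 x (lt0r_neq0 K_gt0); rewrite -res; nia.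
exists j, `|(m - j * k%:Z)%R|%N; rewrite gez0_abs //; split; first ring.
by rewrite res modz_ge0 ?ltz_pmod // gt_eqF.
Qed.

Lemma residue_eq0_l4_eq1 (l l3 l4 : nat) (a b n : int) :
  (0 < l)%N -> (l <= l3 <= l4)%N -> a * l3%:Z + b * l4%:Z = 1 ->
  n * l4%:Z - a * l%:Z = 0 -> l4 = 1%N.
Proof.
move=> l_gt0 /andP[l_l3 l3_l4] bez res0.
have l4_dvd_l : (l4 %| l)%N.
  rewrite -[l]/(`|l%:Z|)%N -[l4]/(`|l4%:Z|)%N -dvdzE; apply/dvdzP.
  exists (n * l3%:Z + b * l%:Z).
  rewrite [LHS](_ : _ = l%:Z * (a * l3%:Z + b * l4%:Z) + l3%:Z * (n * l4%:Z - a * l%:Z)).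
    by ring.
  by rewrite bez res0 mulr1 mulr0 addr0.
have l3_l4E : l3 = l4 by have := dvdn_leq l_gt0 l4_dvd_l; lia.
have : (l4%:Z %| a * l3%:Z + b * l4%:Z)%Z by rewrite l3_l4E rpredD ?dvdz_mull.
by rewrite bez dvdz1 => /eqP.
Qed.

Lemma vec3_relation (l1 l2 l3 l4 p q r s t u : int) :
  l1 *: vec3 1 0 0 + l2 *: vec3 0 1 0 + l3 *: vec3 p q r + l4 *: vec3 s t u = 0 ->
  [/\ l1 + l3 * p + l4 * s = 0, l2 + l3 * q + l4 * t = 0 & l3 * r + l4 * u = 0].
Proof.
rewrite !vec3Z !vec3D -vec30 => /vec3_inj[e1 e2 e3].
by split; [rewrite -[RHS]e1 | rewrite -[RHS]e2 | rewrite -[RHS]e3]; ring.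
Qed.

Definition normal_form (x1 x2 x3 x4 : pt) (l1 l2 l3 l4 : nat) : Prop :=
  exists (g : 'M[int]_3) (a b : int) (k k' k'' : nat),
    [/\ g \in unitmx, 0 < a & a * l3%:Z + b * l4%:Z = 1] /\
    [/\ 0 <= k''%:Z * l4%:Z - a * l1%:Z, k''%:Z * l4%:Z - a * l1%:Z < k%:Z * l4%:Z,
        0 <= k'%:Z * l4%:Z - a * l2%:Z & k'%:Z * l4%:Z - a * l2%:Z < k%:Z * l4%:Z] /\
    [/\ g *m x1 = vec3 1 0 0, g *m x2 = vec3 0 1 0,
        g *m x3 = vec3 (k''%:Z * l4%:Z - a * l1%:Z) (k'%:Z * l4%:Z - a * l2%:Z) (k%:Z * l4%:Z)
      & g *m x4 = vec3 (- (k''%:Z * l3%:Z) - b * l1%:Z) (- (k'%:Z * l3%:Z) - b * l2%:Z)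
                       (- (k%:Z * l3%:Z))] /\
    ((k''%:Z * l4%:Z - a * l1%:Z = 0 \/ k'%:Z * l4%:Z - a * l2%:Z = 0) -> l4 = 1%N).

Lemma normal_form_mulmx (h : 'M[int]_3) (x1 x2 x3 x4 : pt) (l1 l2 l3 l4 : nat) :
  h \in unitmx ->
  normal_form (h *m x1) (h *m x2) (h *m x3) (h *m x4) l1 l2 l3 l4 ->
  normal_form x1 x2 x3 x4 l1 l2 l3 l4.
Proof.
move=> h_unit [g [a [b [k [k' [k'' [[g_unit a_gt0 bez] [ineqs [[gx1 gx2 gx3 gx4] l4_eq1]]]]]]]]].
exists (g *m h), a, b, k, k', k''.
by rewrite unitmx_mul g_unit h_unit -!mulmxA gx1 gx2 gx3 gx4.
Qed.

Lemma normal_form_std (l1 l2 l3 l4 : nat) (p q r s t u : int) :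
  (0 < l1)%N -> (l1 <= l2 <= l3)%N -> (l3 <= l4)%N ->
  gcdn (gcdn (gcdn l1 l2) l3) l4 = 1%N -> 0 < r ->
  l1%:Z *: vec3 1 0 0 + l2%:Z *: vec3 0 1 0 + l3%:Z *: vec3 p q r + l4%:Z *: vec3 s t u = 0 ->
  normal_form (vec3 1 0 0) (vec3 0 1 0) (vec3 p q r) (vec3 s t u) l1 l2 l3 l4.
Proof.
move=> l1_gt0 /andP[l12 l23] l34 gcd1 r_gt0 /vec3_relation[rel1 rel2 rel3].
have l3_gt0 : (0 < l3)%N by lia.
have l4_gt0 : (0 < l4)%N by lia.
have [a [b [a_gt0 bez]]] := bezout_pos l3_gt0 (coprime_of_relations gcd1 rel1 rel2).
have [m [-> ->]] := bezout_solution bez rel1.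
have [m' [-> ->]] := bezout_solution bez rel2.
have [k0 [r_k0 u_k0]] : exists k0, r = k0 * l4%:Z - a * 0 /\ u = - (k0 * l3%:Z) - b * 0.
  by apply: bezout_solution bez _; rewrite add0r.
subst r u; clear rel3.
rewrite !mulr0 !subr0 pmulr_lgt0 ?ltz_nat // in r_gt0 *.
case: k0 r_gt0 => [k k_gt0 | //].
have [j [k'' [-> res1]]] := exists_nat_residue l1 m k_gt0 l4_gt0 (ltW a_gt0).
have [j' [k' [-> res2]]] := exists_nat_residue l2 m' k_gt0 l4_gt0 (ltW a_gt0).
exists (mx3 1 0 (- j) 0 1 (- j') 0 0 1), a, b, k, k', k''.
split; first by rewrite shear_unitmx.
split; first by case/andP: res1 => -> ->; case/andP: res2 => -> ->.
split; first by split; rewrite mx3_vec3; congr vec3; ring.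
by case=> res0; apply: (residue_eq0_l4_eq1 _ _ bez res0); lia.
Qed.

Lemma toQD (p q : pt) : toQ (p + q) = toQ p + toQ q.
Proof. exact: map_mxD. Qed.

Lemma toQZ (z : int) (p : pt) : toQ (z *: p) = z%:~R *: toQ p.
Proof. exact: map_mxZ. Qed.

Lemma toQ0 : toQ 0 = 0.
Proof. exact: map_mx0. Qed.

Lemma toQB (p q : pt) : toQ (p - q) = toQ p - toQ q.
Proof. exact: map_mxB. Qed.

Lemma nondegenerate_affine_indep (x1 x2 x3 x4 : pt) (w1 w2 w3 w4 : rat) :
  Defs.nondegenerate x1 x2 x3 x4 -> w1 + w2 + w3 + w4 = 0 ->
  w1 *: toQ x1 + w2 *: toQ x2 + w3 *: toQ x3 + w4 *: toQ x4 = 0 ->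
  [/\ w1 = 0, w2 = 0, w3 = 0 & w4 = 0].
Proof.
move=> nd sum0 rel.
pose MQ := map_mx (fun z : int => z%:~R : rat) (row_mx (row_mx (x2 - x1) (x3 - x1)) (x4 - x1)).
have uM : MQ \in unitmx by rewrite unitmxE unitfE det_map_mx intr_eq0.
pose v : 'cV[rat]_(1 + 1 + 1) := col_mx (col_mx w2%:M w3%:M) w4%:M.
have Mv : MQ *m v = 0.
  rewrite /MQ /v !map_row_mx !mul_row_col !mul_mx_scalar -[RHS]rel.
  have -> : w1 = - (w2 + w3 + w4) by lra.
  by apply/matrixP=> i j; rewrite !mxE; ring.
have v0 : v = 0 by rewrite -(mulKmx uM v) Mv mulmx0.
move/eqP: v0; rewrite !col_mx_eq0 => /andP[/andP[]].
move=> /eqP/matrixP/(_ 0 0) w2_0 /eqP/matrixP/(_ 0 0) w3_0 /eqP/matrixP/(_ 0 0) w4_0.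
rewrite !mxE /= !mulr1n in w2_0 w3_0 w4_0.
by split=> //; move: sum0; rewrite w2_0 w3_0 w4_0 !addr0.
Qed.

Section FanoTetrahedron.

Variables x1 x2 x3 x4 : pt.
Hypothesis fano_x : fano x1 x2 x3 x4.

Lemma fano_relation_trivial (w1 w2 w3 w4 : rat) :
  w1 *: toQ x1 + w2 *: toQ x2 + w3 *: toQ x3 + w4 *: toQ x4 = 0 ->
  w1 * w2 * w3 * w4 = 0 -> [/\ w1 = 0, w2 = 0, w3 = 0 & w4 = 0].
Proof.
have [nd [c1 [c2 [c3 [c4 [[c1_gt0 c2_gt0 c3_gt0 c4_gt0] [c_sum c_rel]]]]]] _] := fano_x.
move=> w_rel w_prod0; set S := w1 + w2 + w3 + w4.
have [e1 e2 e3 e4] : [/\ w1 - S * c1 = 0, w2 - S * c2 = 0, w3 - S * c3 = 0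
                      & w4 - S * c4 = 0].
  apply: nondegenerate_affine_indep nd _ _.
    transitivity (S * (1 - (c1 + c2 + c3 + c4))); first by rewrite /S; ring.
    by rewrite c_sum subrr mulr0.
  apply/matrixP=> i j; move/matrixP: w_rel => /(_ i j); move/matrixP: c_rel => /(_ i j).
  rewrite !mxE => c_ij w_ij.
  by rewrite -[RHS](subr0 0) -[X in _ = X - _]w_ij -[X in _ = _ - X](mulr0 S) c_ij; ring.
have S0 : S = 0.
  have S_c0 (c w : rat) : 0 < c -> w - S * c = 0 -> w = 0 -> S = 0.
    move=> c_gt0 + w0; rewrite w0 sub0r => /eqP.
    by rewrite oppr_eq0 mulf_eq0 (gt_eqF c_gt0) orbF => /eqP.
  move/eqP: w_prod0; rewrite !mulf_eq0 -!orbA => /or4P[] /eqP.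
  - exact: S_c0 c1_gt0 e1.
  - exact: S_c0 c2_gt0 e2.
  - exact: S_c0 c3_gt0 e3.
  - exact: S_c0 c4_gt0 e4.
by move: e1 e2 e3 e4; rewrite S0 !mul0r !subr0.
Qed.

Lemma fano_int_relation_trivial (w1 w2 w3 w4 : int) :
  w1 *: x1 + w2 *: x2 + w3 *: x3 + w4 *: x4 = 0 ->
  w1 * w2 * w3 * w4 = 0 -> [/\ w1 = 0, w2 = 0, w3 = 0 & w4 = 0].
Proof.
move=> /(congr1 toQ); rewrite !toQD !toQZ toQ0 => rel /(congr1 (fun z : int => z%:~R : rat)).
rewrite !rmorphM /= mulr0z => /(fano_relation_trivial rel)[].
by move=> /eqP + /eqP + /eqP + /eqP; rewrite !intr_eq0 => /eqP-> /eqP-> /eqP-> /eqP->.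
Qed.

Lemma fano_triangle (p : pt) (s1 s2 : rat) :
  0 <= s1 -> 0 <= s2 -> s1 + s2 <= 1 -> toQ p = s1 *: toQ x1 + s2 *: toQ x2 ->
  [\/ s1 = 0 /\ s2 = 0, s1 = 1 /\ s2 = 0 | s1 = 0 /\ s2 = 1].
Proof.
have [_ [c1 [c2 [c3 [c4 [[c1_gt0 c2_gt0 c3_gt0 c4_gt0] [c_sum c_rel]]]]]] empty] := fano_x.
move=> s1_ge0 s2_ge0 s_le1 p_s.
have coords (u1 u2 u3 u4 : rat) :
    toQ p = u1 *: toQ x1 + u2 *: toQ x2 + u3 *: toQ x3 + u4 *: toQ x4 ->
    u3 * u4 = 0 -> [/\ s1 = u1, s2 = u2, u3 = 0 & u4 = 0].
  move=> p_u u34.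
  have [] := @fano_relation_trivial (s1 - u1) (s2 - u2) (- u3) (- u4).
  - apply/matrixP=> i j; move/matrixP: p_s => /(_ i j); move/matrixP: p_u => /(_ i j).
    rewrite !mxE => p_u_ij p_s_ij.
    by rewrite -[RHS](subrr ((p i j)%:~R)) {1}p_s_ij p_u_ij; ring.
  - by rewrite -mulrA mulrNN u34 mulr0.
  - move=> /eqP + /eqP + /eqP + /eqP; rewrite !subr_eq0 !oppr_eq0.
    by move=> /eqP-> /eqP-> /eqP-> /eqP->.
(* [p] is [s1 x1 + s2 x2 + t 0], and the origin has barycentric coordinates [c]. *)
set t := 1 - s1 - s2.
have : in_tetra x1 x2 x3 x4 (toQ p).
  exists (s1 + t * c1), (s2 + t * c2), (t * c3), (t * c4); split.
    have t_ge0 : 0 <= t by rewrite /t; lra.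
    by split; rewrite ?addr_ge0 ?mulr_ge0 // ltW.
  split.
    transitivity (s1 + s2 + t * (c1 + c2 + c3 + c4)); first by ring.
    by rewrite c_sum mulr1 /t; ring.
  apply/matrixP=> i j; move/matrixP: c_rel => /(_ i j); move/matrixP: p_s => /(_ i j).
  by rewrite !mxE => -> c_ij; rewrite -[LHS]addr0 -[X in _ + X = _](mulr0 t) c_ij; ring.
move/empty=> [|[|[|[|]]]] p_E; subst p.
- have := coords 0 0 0 0; rewrite toQ0 !scale0r !addr0 mulr0.
  by move=> /(_ erefl erefl) [<- <- _ _]; constructor 1.
- have := coords 1 0 0 0; rewrite scale1r !scale0r !addr0 mulr0.
  by move=> /(_ erefl erefl) [<- <- _ _]; constructor 2.
- have := coords 0 1 0 0; rewrite scale1r !scale0r add0r !addr0 mulr0.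
  by move=> /(_ erefl erefl) [<- <- _ _]; constructor 3.
- have := coords 0 0 1 0; rewrite scale1r !scale0r !add0r addr0 mulr0.
  by move=> /(_ erefl erefl) [_ _ /eqP]; rewrite oner_eq0.
- have := coords 0 0 0 1; rewrite scale1r !scale0r !add0r mul0r.
  by move=> /(_ erefl erefl) [_ _ _ /eqP]; rewrite oner_eq0.
Qed.

Lemma fano_parallelogram (p : pt) (s1 s2 : rat) :
  0 <= s1 < 1 -> 0 <= s2 < 1 -> toQ p = s1 *: toQ x1 + s2 *: toQ x2 ->
  s1 = 0 /\ s2 = 0.
Proof.
move=> /andP[s1_ge0 s1_lt1] /andP[s2_ge0 s2_lt1] p_s.
have [s_le1 | s_gt1] := lerP (s1 + s2) 1.
  by case: (fano_triangle s1_ge0 s2_ge0 s_le1 p_s) => [//|[s1_1 _]|[_ s2_1]]; lra.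
have q_s : toQ (x1 + x2 - p) = (1 - s1) *: toQ x1 + (1 - s2) *: toQ x2.
  by rewrite toQB toQD p_s !scalerBl !scale1r addrACA opprD.
have s1'_ge0 : 0 <= 1 - s1 by lra.
have s2'_ge0 : 0 <= 1 - s2 by lra.
have s'_le1 : 1 - s1 + (1 - s2) <= 1 by lra.
by case: (fano_triangle s1'_ge0 s2'_ge0 s'_le1 q_s) => [[e _]|[_ e]|[e _]]; lra.
Qed.

Lemma fano_primitive_pair : primitive_pair x1 x2.
Proof.
have pos_case (m1 m2 D : int) (y : pt) : 0 < D ->
    m1 *: x1 + m2 *: x2 = D *: y -> (D %| m1)%Z /\ (D %| m2)%Z.
  move=> D_gt0 m_y; have D_neq0 : D != 0 by rewrite gt_eqF.
  pose y' : pt := y - (m1 %/ D)%Z *: x1 - (m2 %/ D)%Z *: x2.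
  have y'_r : toQ y' = ((m1 %% D)%Z%:~R / D%:~R) *: toQ x1 + ((m2 %% D)%Z%:~R / D%:~R) *: toQ x2.
    have D_y' : D *: y' = (m1 %% D)%Z *: x1 + (m2 %% D)%Z *: x2.
      apply/matrixP=> i j; move/matrixP: m_y => /(_ i j); rewrite !mxE.
      rewrite {1}(divz_eq m1 D) {1}(divz_eq m2 D).
      by move=> m_y_ij; rewrite !mulrBr -m_y_ij; ring.
    have DQ_neq0 : D%:~R != 0 :> rat by rewrite intr_eq0.
    move/(congr1 toQ): D_y'; rewrite toQD !toQZ => D_y'.
    by rewrite -(scalerK DQ_neq0 (toQ y')) D_y' scalerDr !scalerA ![_^-1 * _]mulrC.
  have frac_ge0 (m : int) : 0 <= (m %% D)%Z%:~R / D%:~R :> rat.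
    by apply: divr_ge0; rewrite ler0z ?modz_ge0 // ltW.
  have frac_lt1 (m : int) : (m %% D)%Z%:~R / D%:~R < 1 :> rat.
    by rewrite ltr_pdivrMr ?ltr0z // mul1r ltr_int ltz_pmod.
  have [] := fano_parallelogram _ _ y'_r; rewrite ?frac_ge0 ?frac_lt1 //.
  by move=> /eqP + /eqP; rewrite !mulf_eq0 !invr_eq0 !intr_eq0 (negPf D_neq0) !orbF
    => /eqP/dvdz_mod0P D_m1 /eqP/dvdz_mod0P D_m2.
move=> m1 m2 D y; have [D_gt0 | D_lt0 | ->] := ltrgt0P D.
- exact: pos_case.
- have ND_gt0 : 0 < - D by rewrite oppr_gt0.
  rewrite -[D *: y]opprK -scaleNr -scalerN => /(pos_case _ _ _ _ ND_gt0).
  by rewrite !dvdzE abszN.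
- have := @fano_int_relation_trivial m1 m2 0 0; rewrite !scale0r !addr0 mulr0.
  by move=> + m_0 => /(_ m_0 erefl) [-> -> _ _]; rewrite dvdz0.
Qed.

Lemma fano_basis : exists2 g : 'M[int]_3, g \in unitmx &
  [/\ g *m x1 = vec3 1 0 0, g *m x2 = vec3 0 1 0 & 0 < (g *m x3) 2 0].
Proof.
have [g g_unit [gx1 gx2]] := primitive_pair_basis fano_primitive_pair.
have gx3_2 : (g *m x3) 2 0 != 0.
  apply/eqP=> gx3_0; pose p := (g *m x3) 0 0; pose q := (g *m x3) 1 0.
  have x3_pq : x3 = p *: x1 + q *: x2.
    apply: (can_inj (mulKmx g_unit)).
    by rewrite mulmxDr -!scalemxAr gx1 gx2 (vec3_eta (g *m x3)) gx3_0 !vec3Z vec3D; congr vec3; ring.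
  have := @fano_int_relation_trivial p q (-1) 0; rewrite mulr0 scale0r addr0 scaleN1r x3_pq subrr.
  by move=> /(_ erefl erefl) [_ _ /eqP]; rewrite oppr_eq0 oner_eq0.
have [gx3_gt0 | gx3_lt0 | gx3_0] := ltrgt0P ((g *m x3) 2 0); first by exists g.
  2: by rewrite gx3_0 eqxx in gx3_2.
pose flip := mx3 1 0 0 0 1 0 0 0 (-1).
exists (flip *m g); last first.
  set r := (g *m x3) 2 0 in gx3_lt0 *.
  rewrite -!mulmxA gx1 gx2 (vec3_eta (g *m x3)) -/r !mx3_vec3 [X in 0 < X]mxE /=.
  by split; [congr vec3; ring | congr vec3; ring | rewrite !mul0r !add0r mulN1r oppr_gt0].
rewrite unitmx_mul g_unit andbT.
suff /mulmx1_unit[] : flip *m flip = 1%:M by [].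
by rewrite mx3_mul -mx3_1; congr mx3; ring.
Qed.

End FanoTetrahedron.

Theorem proposition3p1 (x1 x2 x3 x4 : pt) (l1 l2 l3 l4 : nat) :
  fano x1 x2 x3 x4 ->
  (l1 <= l2 <= l3)%N -> (l3 <= l4)%N ->
  gcdn (gcdn (gcdn l1 l2) l3) l4 = 1%N ->
  l1%:Z *: x1 + l2%:Z *: x2 + l3%:Z *: x3 + l4%:Z *: x4 = 0 ->
  exists (g : 'M[int]_3) (a b : int) (k k' k'' : nat),
    [/\ g \in unitmx, 0 < a & a * l3%:Z + b * l4%:Z = 1] /\
    [/\ 0 <= k''%:Z * l4%:Z - a * l1%:Z, k''%:Z * l4%:Z - a * l1%:Z < k%:Z * l4%:Z,
        0 <= k'%:Z * l4%:Z - a * l2%:Z & k'%:Z * l4%:Z - a * l2%:Z < k%:Z * l4%:Z] /\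
    [/\ g *m x1 = vec3 1 0 0, g *m x2 = vec3 0 1 0,
        g *m x3 = vec3 (k''%:Z * l4%:Z - a * l1%:Z) (k'%:Z * l4%:Z - a * l2%:Z) (k%:Z * l4%:Z)
      & g *m x4 = vec3 (- (k''%:Z * l3%:Z) - b * l1%:Z) (- (k'%:Z * l3%:Z) - b * l2%:Z)
                       (- (k%:Z * l3%:Z))] /\
    ((k''%:Z * l4%:Z - a * l1%:Z = 0 \/ k'%:Z * l4%:Z - a * l2%:Z = 0) -> l4 = 1%N).
Proof.
move=> fano_x l_sorted l34 gcd1 rel.
have l1_gt0 : (0 < l1)%N.
  rewrite lt0n; apply/eqP => l1_0.
  have := fano_int_relation_trivial fano_x rel; rewrite l1_0 !mul0r.
  by move=> /(_ erefl) [_ [l2_0] [l3_0] [l4_0]]; move: gcd1; rewrite l1_0 l2_0 l3_0 l4_0.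
have [g g_unit [gx1 gx2 gx3_gt0]] := fano_basis fano_x.
apply: (normal_form_mulmx g_unit).
rewrite gx1 gx2 (vec3_eta (g *m x3)) (vec3_eta (g *m x4)).
apply: normal_form_std l1_gt0 l_sorted l34 gcd1 gx3_gt0 _.
by rewrite -gx1 -gx2 -!vec3_eta !scalemxAr -!mulmxDr rel mulmx0.
Qed.
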